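(* Let $s\in\{1,\ldots,d\}$, $M\in\mathbb{R}^{\mathcal{I}}$, $P\subset\mathcal{I}$, $\alpha\in\mathbb{R}$. Let $G^-$ and $G$ be TT representations with the same ranks, where $G_1,\ldots,G_{s-1}$ are left orthogonal and $G_{s+1},\ldots,G_d$ are right orthogonal. Define $Z\in\mathbb{R}^{\mathcal{I}}$ by $Z_i:=M_i$ for $i\in P$ and $Z_i:=A^{G^-}_i$ for $i\in\mathcal{I}\setminus P$, and $Z^\alpha:=\alpha Z+(1-\alpha)A^{G^-}$. Then the minimizer of $\|Z^\alpha-A^{\tilde G}\|_F$ over $\tilde G_s$, where $\tilde G_\nu:=G_\nu$ for $\nu\neq s$ (the update block with overrelaxation parameter $\alpha$), is the block $G_s^{new}$ given for all $j\in\mathcal{I}_s$ by \[ G_s^{new}(j) = (G^{<s})^T (G^-)^{<s}\, G^{-}_s(j)\, (G^-)^{>s} (G^{>s})^T + \sum_{i \in P,\, i_s = j} \alpha\, (M_i - A^{G^{-}}_i)\, (G_1(i_1)\cdots G_{s-1}(i_{s-1}))^T\, (G_{s+1}(i_{s+1})\cdots G_d(i_d))^T. \]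
   Context: Let $\mathcal{I}_\mu=\{1,\ldots,n_\mu\}$, $\mathcal{I}=\mathcal{I}_1\times\cdots\times\mathcal{I}_d$. A TT representation with ranks $r_0=1,r_1,\ldots,r_{d-1},r_d=1$ consists of maps $G_\mu:\mathcal{I}_\mu\to\mathbb{R}^{r_{\mu-1}\times r_\mu}$; it represents $A^G_{i_1,\ldots,i_d}=G_1(i_1)\cdots G_d(i_d)$. $\|\cdot\|_F$ is the Euclidean norm of all entries. $G_\mu$ is left orthogonal if $\sum_{i}G_\mu(i)^TG_\mu(i)=I$, right orthogonal if $\sum_i G_\mu(i)G_\mu(i)^T=I$. For a representation $H$, $H^{<s}$ is the matrix with rows indexed by $(i_1,\ldots,i_{s-1})$, row $(i_1,\ldots,i_{s-1})$ being $H_1(i_1)\cdots H_{s-1}(i_{s-1})\in\mathbb{R}^{1\times r_{s-1}}$ (the $1\times1$ identity if $s=1$), and $H^{>s}$ is the matrix with columns indexed by $(i_{s+1},\ldots,i_d)$, column $(i_{s+1},\ldots,i_d)$ being $H_{s+1}(i_{s+1})\cdots H_d(i_d)\in\mathbb{R}^{r_s\times1}$ (the $1\times1$ identity if $s=d$). *)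

From HB Require Import structures.
From mathcomp Require Import all_boot all_order all_algebra.
Set Implicit Arguments. Unset Strict Implicit. Unset Printing Implicit Defensive.
Import Order.TTheory GRing.Theory Num.Theory.
Local Open Scope ring_scope.

(* Conventions (0-based): the paper's mode mu = 1..d is our position mu = 0..d-1.
   n mu = n_{mu+1};  ranks r : nat -> nat with r mu = r_{mu} of the paper, so the
   core at position mu has size r mu x r mu.+1, and r 0 = r d = 1 are hypotheses. *)

Section TT.
Variables (R : rcfType) (d : nat) (n r : nat -> nat).

(* A TT representation: one core G mu : I_mu -> R^{r mu x r (mu+1)} per position
   (only positions mu < d are ever used). *)
Definition tt_rep := forall mu : nat, 'I_(n mu) -> 'M[R]_(r mu, r mu.+1).

Local Notation midx := {dffun forall mu : 'I_d, 'I_(n mu)}.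
Local Notation pidx s := {dffun forall j : 'I_s, 'I_(n j)}.
Local Notation sidx s := {dffun forall j : 'I_(d - s.+1), 'I_(n (j + s.+1))}.

Fixpoint cprod (G : tt_rep) (a k : nat) :
    (forall j : 'I_k, 'I_(n (j + a))) -> 'M[R]_(r a, r (k + a)) :=
  match k return (forall j : 'I_k, 'I_(n (j + a))) -> 'M[R]_(r a, r (k + a)) with
  | 0 => fun _ => 1%:M
  | k'.+1 => fun f =>
      cprod G (fun j : 'I_k' => f (widen_ord (leqnSn k') j)) *m G (k' + a) (f ord_max)
  end.

Lemma n_addn0 (j : nat) : n j = n (j + 0)%N. Proof. by rewrite addn0. Qed.
Lemma r_addn0 (j : nat) : r (j + 0)%N = r j. Proof. by rewrite addn0. Qed.

Lemma suff_lt (s : nat) (j : 'I_(d - s.+1)) : (j + s.+1 < d)%N.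
Proof. have := ltn_ord j; rewrite ltn_subRL addnC; exact. Qed.

Lemma subnK' (s : 'I_d) : (d - s.+1 + s.+1 = d)%N.
Proof. by rewrite subnK // ltn_ord. Qed.

Variables (r0 : r 0 = 1%N) (rd : r d = 1%N).

(* A^G_i = G_1(i_1) ... G_d(i_d), a 1 x 1 matrix identified with a scalar *)
Definition ttval (G : tt_rep) (i : midx) : R :=
  (castmx (r0, etrans (r_addn0 d) rd)
     (cprod G (a := 0) (k := d) (fun j => cast_ord (n_addn0 j) (i j)))) ord0 ord0.

(* row (i_1..i_{s}) of H^{<s} : the 1 x r_s row  H_1(i_1) ... H_s(i_s)
   (paper: H^{<s+1}; empty product = 1 x 1 identity) *)
Definition lrow (G : tt_rep) (s : nat) (p : pidx s) : 'rV[R]_(r s) :=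
  castmx (r0, r_addn0 s)
    (cprod G (a := 0) (k := s) (fun j => cast_ord (n_addn0 j) (p j))).

Definition rcol (G : tt_rep) (s : 'I_d) (q : sidx s) : 'cV[R]_(r s.+1) :=
  castmx (erefl (r s.+1), etrans (congr1 r (subnK' s)) rd)
    (cprod G (a := s.+1) (k := d - s.+1) (fun j => q j)).

Definition pre_of (s : 'I_d) (i : midx) : pidx s :=
  [ffun j : 'I_s => i (widen_ord (ltnW (ltn_ord s)) j)].
Definition suf_of (s : 'I_d) (i : midx) : sidx s :=
  [ffun j : 'I_(d - s.+1) => i (Ordinal (suff_lt j))].

End TT.

Notation midx d n := {dffun forall mu : 'I_d, 'I_(n mu)}.
Notation pidx n s := {dffun forall j : 'I_s, 'I_(n j)}.
Notation sidx d n s := {dffun forall j : 'I_(d - s.+1), 'I_(n (j + s.+1))%N}.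

Arguments ttval {R d n r} r0 rd G i.
Arguments lrow {R n r} r0 G s p.
Arguments rcol {R d n r} rd G s q.

Definition left_orth (R : rcfType) (n r : nat -> nat) (G : tt_rep R n r) (mu : nat) :=
  \sum_(i : 'I_(n mu)) (G mu i)^T *m G mu i = 1%:M.
Definition right_orth (R : rcfType) (n r : nat -> nat) (G : tt_rep R n r) (mu : nat) :=
  \sum_(i : 'I_(n mu)) G mu i *m (G mu i)^T = 1%:M.

Definition upd (R : rcfType) (n r : nat -> nat) (G : tt_rep R n r) (s : nat)
    (H : 'I_(n s) -> 'M[R]_(r s, r s.+1)) : tt_rep R n r :=
  fun mu => match @eqP _ s mu with
            | ReflectT e => eq_rect s (fun m => 'I_(n m) -> 'M[R]_(r m, r m.+1)) H mu e
            | ReflectF _ => G mu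
            end.

Definition frob (R : rcfType) (d : nat) (n : nat -> nat) (X : midx d n -> R) : R :=
  Num.sqrt (\sum_(i : midx d n) X i ^+ 2).

From HB Require Import structures.
From mathcomp Require Import all_boot all_order all_algebra.
From mathcomp Require Import ring.
Set Implicit Arguments. Unset Strict Implicit. Unset Printing Implicit Defensive.
Import Order.TTheory GRing.Theory Num.Theory.
Local Open Scope ring_scope.

(* With all cores but the s-th fixed, [A^G~] is linear in [H := G~_s]:
   [A^G~_i = <W_i, H (i_s)>] with [W_i = (G^{<s}_i)^T (G^{>s}_i)^T].  Left and right
   orthogonality of the outer cores make this map an isometry, i.e. its adjoint
   [Y |-> (j |-> sum_{i_s = j} Y_i W_i)] is a left inverse of it.  For an isometry,
   Pythagoras shows that the adjoint of the data is the unique least-squares solution.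
   Writing [Z^alpha = A^{G^-} + alpha (Z - A^{G^-})], the adjoint of [A^{G^-}] is the
   first term of [G_s^new] (factor [A^{G^-}] through its s-th core), and [Z - A^{G^-}]
   vanishes off [P], which gives the second. *)

Section MxChain.
Variables (R : pzRingType) (r : nat -> nat) (X : forall m, 'M[R]_(r m, r m.+1)).

(* [mxchain a b] is [X a *m ... *m X b.-1]; for [b <= a] it is junk: [1%:M] when
   the dimensions agree and [0] otherwise. *)
Fixpoint mxchain a b : 'M[R]_(r a, r b) :=
  match b with
  | 0 => conform_mx 0 (1%:M : 'M_(r a))
  | b'.+1 => if (a <= b')%N then mxchain a b' *m X b' else conform_mx 0 (1%:M : 'M_(r a))
  end.

Lemma mxchainxx a : mxchain a a = 1%:M.
Proof. by case: a => [|a] /=; rewrite ?ltnn conform_mx_id. Qed.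

Lemma mxchainS a : mxchain a a.+1 = X a.
Proof. by rewrite /= leqnn mxchainxx mul1mx. Qed.

Lemma mxchain_split a m b :
  (a <= m <= b)%N -> mxchain a b = mxchain a m *m mxchain m b.
Proof.
case/andP=> am; elim: b => [|b IHb] mb.
  by move: mb; rewrite leqn0 => /eqP mb; subst m; rewrite mxchainxx mulmx1.
move: mb; rewrite leq_eqVlt ltnS => /predU1P[->|mb]; first by rewrite mxchainxx mulmx1.
by rewrite /= (leq_trans am mb) mb IHb // mulmxA.
Qed.

Lemma castmx_mxchain a b b' (e : b = b') c c' (e1 : r a = c) (e2 : r b = c') (e3 : r b' = c') :
  castmx (e1, e2) (mxchain a b) = castmx (e1, e3) (mxchain a b').
Proof. by case: b' / e e3 => e3; rewrite (eq_irrelevance e2 e3). Qed.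
End MxChain.

Lemma castmx_mul (R : pzRingType) m m' k p p' (e1 : m = m') (e2 : p = p')
    (A : 'M[R]_(m, k)) (B : 'M[R]_(k, p)) :
  castmx (e1, e2) (A *m B) = castmx (e1, erefl k) A *m castmx (erefl k, e2) B.
Proof. by case: m' / e1; case: p' / e2; rewrite !castmx_id. Qed.

Lemma sum_trmx_castmx (R : pzRingType) (m m' c c' : nat) (e1 : m = m') (e2 : c = c')
    (T : finType) (A B : T -> 'M[R]_(m, c)) :
  \sum_t (castmx (e1, e2) (A t))^T *m castmx (e1, e2) (B t)
  = castmx (e2, e2) (\sum_t (A t)^T *m B t).
Proof.
by case: m' / e1; case: c' / e2; rewrite castmx_id; under eq_bigr do rewrite !castmx_id.
Qed.

Lemma sum_mul_trmx_castmx (R : pzRingType) (m c c' : nat) (e : c = c') (T : finType)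
    (A B : T -> 'M[R]_(m, c)) :
  \sum_t castmx (erefl m, e) (A t) *m (castmx (erefl m, e) (B t))^T
  = \sum_t A t *m (B t)^T.
Proof. by case: c' / e; under eq_bigr do rewrite !castmx_id. Qed.

Lemma dffun_val_congr (I : finType) (F : I -> nat) (p : {dffun forall j : I, 'I_(F j)}) a b :
  a = b -> nat_of_ord (p a) = nat_of_ord (p b).
Proof. by move->. Qed.

Lemma big_dffun_cast (V : nmodType) (I : finType) (F F' : I -> nat)
    (e : forall j, F j = F' j) (Phi : {dffun forall j : I, 'I_(F' j)} -> V) :
  \sum_(p : {dffun forall j : I, 'I_(F j)}) Phi [ffun j : I => cast_ord (e j) (p j)]
  = \sum_(f : {dffun forall j : I, 'I_(F' j)}) Phi f.
Proof.
rewrite (reindex (fun p : {dffun forall j : I, 'I_(F j)} =>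
  [ffun j : I => cast_ord (e j) (p j)] : {dffun forall j : I, 'I_(F' j)})) //.
exists (fun f : {dffun forall j : I, 'I_(F' j)} =>
  [ffun j : I => cast_ord (esym (e j)) (f j)] : {dffun forall j : I, 'I_(F j)}) => p _;
  by apply/ffunP => j; rewrite !ffunE ?cast_ordK ?cast_ordKV.
Qed.

Lemma card_dffun0 (F : 'I_0 -> nat) : #|{dffun forall j : 'I_0, 'I_(F j)}| = 1%N.
Proof.
rewrite card_dep_ffun; suff -> : [seq #|'I_(F j)| | j : 'I_0] = [::] by [].
by apply: size0nil; rewrite size_map size_enum_ord.
Qed.

Section DffunRcons.
Variables (F : nat -> nat) (k : nat).
Local Notation fam k := {dffun forall j : 'I_k, 'I_(F j)}.

Lemma ord_last_val (j : 'I_k.+1) : (j < k)%N = false -> j = k :> nat.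
Proof. by move=> jk; apply/eqP; rewrite eqn_leq -ltnS ltn_ord leqNgt jk. Qed.

Definition dffun_rcons (p : fam k) (x : 'I_(F k)) : fam k.+1 :=
  [ffun j : 'I_k.+1 => match sumbool_of_bool (j < k)%N with
     | left h => p (Ordinal h)
     | right h => cast_ord (congr1 F (esym (ord_last_val h))) x
     end].

Lemma dffun_rcons_widen p x (j : 'I_k) : dffun_rcons p x (widen_ord (leqnSn k) j) = p j.
Proof.
rewrite ffunE; case: sumbool_of_bool => h; last by exfalso; move: h; rewrite /= ltn_ord.
by apply: val_inj; apply: (dffun_val_congr p); apply: val_inj.
Qed.

Lemma dffun_rcons_last p x : dffun_rcons p x ord_max = x.
Proof.
rewrite ffunE; case: sumbool_of_bool => h; last exact: val_inj.
by exfalso; move: h; rewrite /= ltnn.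
Qed.

Lemma big_dffun_rcons (V : nmodType) (Phi : fam k.+1 -> V) :
  \sum_(p : fam k.+1) Phi p = \sum_(p : fam k) \sum_(x : 'I_(F k)) Phi (dffun_rcons p x).
Proof.
rewrite pair_big /= (reindex (fun u : fam k * 'I_(F k) => dffun_rcons u.1 u.2)) //=.
exists (fun p => ([ffun j : 'I_k => p (widen_ord (leqnSn k) j)], p ord_max)).
  move=> [p x] _ /=; rewrite dffun_rcons_last; congr (_, _).
  by apply/ffunP => j; rewrite ffunE dffun_rcons_widen.
move=> p _; apply/ffunP => j; rewrite ffunE; case: sumbool_of_bool => h.
  by rewrite ffunE; apply: val_inj; apply: (dffun_val_congr p); apply: val_inj.
by apply: val_inj; apply: (dffun_val_congr p); apply: val_inj; rewrite /= ord_last_val.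
Qed.
End DffunRcons.

Section CoreProducts.
Variables (R : rcfType) (n r : nat -> nat).
Implicit Types (G : tt_rep R n r) (a k : nat).

Lemma cprod_mxchain G a k f (X : forall m, 'M[R]_(r m, r m.+1)) :
  (forall j : 'I_k, X (j + a)%N = G (j + a)%N (f j)) ->
  cprod G (a := a) (k := k) f = mxchain X a (k + a).
Proof.
elim: k f => [|k IHk] f fX /=; first by rewrite mxchainxx.
rewrite leq_addl IHk => [|j]; last exact: (fX (widen_ord (leqnSn k) j)).
by rewrite (fX ord_max).
Qed.

Lemma eq_cprod G G' a k f f' :
  (forall j : 'I_k, G (j + a)%N (f j) = G' (j + a)%N (f' j)) ->
  cprod G (a := a) (k := k) f = cprod G' (a := a) (k := k) f'.
Proof.
elim: k f f' => [|k IHk] f f' eqGf //=.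
rewrite (IHk _ (fun j => f' (widen_ord (leqnSn k) j))) => [|j].
  by rewrite (eqGf ord_max).
exact: (eqGf (widen_ord (leqnSn k) j)).
Qed.

Local Notation fam a k := {dffun forall j : 'I_k, 'I_(n (j + a)%N)}.

Lemma cprod_rcons G a k (f : fam a k) x :
  cprod G (dffun_rcons (F := fun j => n (j + a)%N) f x) = cprod G f *m G (k + a)%N x.
Proof.
rewrite /= dffun_rcons_last; congr (_ *m _); apply: eq_cprod => j.
by rewrite dffun_rcons_widen.
Qed.

Lemma sum_cprod_left_orth G a k :
  (forall m, (a <= m < k + a)%N -> left_orth G m) ->
  \sum_(f : fam a k) (cprod G f)^T *m cprod G f = 1%:M.
Proof.
elim: k => [|k IHk] orthG.
  by under eq_bigr do rewrite /= trmx1 mulmx1; rewrite sumr_const card_dffun0.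
rewrite (big_dffun_rcons (F := fun j => n (j + a)%N)) exchange_big.
under eq_bigr do under eq_bigr do
  rewrite cprod_rcons trmx_mul !mulmxA -[_ *m _ *m cprod _ _]mulmxA.
have IH : \sum_(f : fam a k) (cprod G f)^T *m cprod G f = 1%:M.
  by apply: IHk => m /andP[am mk]; apply: orthG; rewrite am addSn ltnS (ltnW mk).
under eq_bigr do rewrite -mulmx_suml -mulmx_sumr IH mulmx1.
by apply: (orthG (k + a)%N); rewrite leq_addl addSn ltnSn.
Qed.

Lemma sum_cprod_right_orth G a k :
  (forall m, (a <= m < k + a)%N -> right_orth G m) ->
  \sum_(f : fam a k) cprod G f *m (cprod G f)^T = 1%:M.
Proof.
elim: k => [|k IHk] orthG.
  by under eq_bigr do rewrite /= trmx1 mulmx1; rewrite sumr_const card_dffun0.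
rewrite (big_dffun_rcons (F := fun j => n (j + a)%N)).
under eq_bigr do under eq_bigr do
  rewrite cprod_rcons trmx_mul !mulmxA -[_ *m _ *m (G _ _)^T]mulmxA.
have lastG : \sum_x G (k + a)%N x *m (G (k + a)%N x)^T = 1%:M.
  by apply: (orthG (k + a)%N); rewrite leq_addl addSn ltnSn.
under eq_bigr do rewrite -mulmx_suml -mulmx_sumr lastG mulmx1.
by apply: IHk => m /andP[am mk]; apply: orthG; rewrite am addSn ltnS (ltnW mk).
Qed.
End CoreProducts.

Section FrobeniusDot.
Variables (R : realDomainType) (a b : nat).
Implicit Types A B : 'M[R]_(a, b).

Definition mxdot A B : R := \sum_(x < a) \sum_(y < b) A x y * B x y.

Lemma mxdot_suml (I : finType) (P : pred I) (A : I -> 'M[R]_(a, b)) B :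
  mxdot (\sum_(i | P i) A i) B = \sum_(i | P i) mxdot (A i) B.
Proof.
rewrite /mxdot; under eq_bigr do under eq_bigr do rewrite summxE mulr_suml.
by under eq_bigr do rewrite exchange_big; rewrite exchange_big.
Qed.

Lemma mxdotZl c A B : mxdot (c *: A) B = c * mxdot A B.
Proof.
rewrite /mxdot mulr_sumr; apply: eq_bigr => x _; rewrite mulr_sumr.
by apply: eq_bigr => y _; rewrite mxE mulrA.
Qed.

Lemma mxdotBr A B C : mxdot A (B - C) = mxdot A B - mxdot A C.
Proof.
rewrite /mxdot -sumrB; apply: eq_bigr => x _; rewrite -sumrB.
by apply: eq_bigr => y _; rewrite !mxE mulrBr.
Qed.

Lemma mxdot0l B : mxdot 0 B = 0.
Proof. by rewrite -(scale0r 0) mxdotZl mul0r. Qed.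

Lemma mxdotxx_ge0 A : 0 <= mxdot A A.
Proof. by apply: sumr_ge0 => x _; apply: sumr_ge0 => y _; rewrite -expr2 sqr_ge0. Qed.

Lemma mxdotxx_eq0 A : (mxdot A A == 0) = (A == 0).
Proof.
apply/eqP/eqP => [A0|->]; last by rewrite mxdot0l.
have sqA_ge0 x y : 0 <= A x y * A x y by rewrite -expr2 sqr_ge0.
have rowA_ge0 x : 0 <= \sum_(y < b) A x y * A x y by apply: sumr_ge0.
apply/matrixP => x y; rewrite mxE.
have Ax0 := psumr_eq0P (fun x _ => rowA_ge0 x) A0 (i := x) isT.
have /eqP := psumr_eq0P (fun y _ => sqA_ge0 x y) Ax0 (i := y) isT.
by rewrite mulf_eq0 orbb => /eqP.
Qed.

Lemma mxdot_mul_rowcol (L : 'rV[R]_a) (A : 'M[R]_(a, b)) (C : 'cV[R]_b) :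
  (L *m A *m C) 0 0 = mxdot (L^T *m C^T) A.
Proof.
rewrite /mxdot !mxE; under eq_bigr do rewrite mxE mulr_suml.
rewrite exchange_big /=; apply: eq_bigr => x _; apply: eq_bigr => y _.
by rewrite mxE big_ord1 !mxE mulrAC.
Qed.
End FrobeniusDot.

Lemma scale_mul_rowcol (R : comPzRingType) a a' b b' (L : 'rV[R]_a) (L' : 'rV[R]_a')
    (A : 'M[R]_(a, b)) (C : 'cV[R]_b) (C' : 'cV[R]_b') :
  (L *m A *m C) 0 0 *: (L'^T *m C'^T) = L'^T *m L *m A *m C *m C'^T.
Proof.
have -> : L'^T *m L *m A *m C *m C'^T = L'^T *m (L *m A *m C) *m C'^T.
  by rewrite !mulmxA.
set c := (L *m A *m C) 0 0.
by rewrite [L *m A *m C]mx11_scalar mul_mx_scalar scalemxAl.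
Qed.

Section LeastSquares.
Variables (R : realDomainType) (I J : finType) (a b : nat).
Variables (key : I -> J) (W : I -> 'M[R]_(a, b)).
Implicit Types (Y : I -> R) (H : J -> 'M[R]_(a, b)).

(* [lsq_adj] is the adjoint of [lsq_map] ([lsq_adjP]); when it is moreover a left
   inverse of it, [lsq_adj Y] is the unique minimizer of [lsq_err Y]. *)
Definition lsq_map H i : R := mxdot (W i) (H (key i)).
Definition lsq_adj Y j : 'M[R]_(a, b) := \sum_(i | key i == j) Y i *: W i.
Definition lsq_err Y H : R := \sum_i (Y i - lsq_map H i) ^+ 2.

Lemma eq_lsq_adj Y Y' : Y =1 Y' -> lsq_adj Y =1 lsq_adj Y'.
Proof. by move=> eqY j; apply: eq_bigr => i _; rewrite eqY. Qed.

Lemma eq_lsq_err Y H H' : H =1 H' -> lsq_err Y H = lsq_err Y H'.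
Proof. by move=> eqH; apply: eq_bigr => i _; rewrite /lsq_map eqH. Qed.

Lemma lsq_adjD Y Y' j :
  lsq_adj (fun i => Y i + Y' i) j = lsq_adj Y j + lsq_adj Y' j.
Proof. by rewrite /lsq_adj -big_split; apply: eq_bigr => i _; rewrite scalerDl. Qed.

Lemma lsq_adjB Y Y' j :
  lsq_adj (fun i => Y i - Y' i) j = lsq_adj Y j - lsq_adj Y' j.
Proof. by rewrite /lsq_adj -sumrB; apply: eq_bigr => i _; rewrite scalerBl. Qed.

Lemma lsq_adjP Y H : \sum_i Y i * lsq_map H i = \sum_j mxdot (lsq_adj Y j) (H j).
Proof.
rewrite (partition_big key xpredT) //=; apply: eq_bigr => j _.
rewrite mxdot_suml; apply: eq_bigr => i /eqP <-.
by rewrite mxdotZl.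
Qed.

Hypothesis lsq_adjK : forall H j, lsq_adj (lsq_map H) j = H j.

Lemma lsq_err_pythagoras Y H :
  lsq_err Y H
  = lsq_err Y (lsq_adj Y) + \sum_j mxdot (H j - lsq_adj Y j) (H j - lsq_adj Y j).
Proof.
set H0 := lsq_adj Y; pose D j := H j - H0 j.
have mapH i : lsq_map H i = lsq_map H0 i + lsq_map D i.
  by rewrite /lsq_map mxdotBr addrC subrK.
have residual_orth : \sum_i (Y i - lsq_map H0 i) * lsq_map D i = 0.
  by rewrite lsq_adjP; apply: big1 => j _; rewrite lsq_adjB lsq_adjK subrr mxdot0l.
have mapD_norm : \sum_i lsq_map D i * lsq_map D i = \sum_j mxdot (D j) (D j).
  by rewrite lsq_adjP; apply: eq_bigr => j _; rewrite lsq_adjK.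
rewrite /lsq_err.
transitivity (\sum_i ((Y i - lsq_map H0 i) ^+ 2 + lsq_map D i * lsq_map D i
                      - ((Y i - lsq_map H0 i) * lsq_map D i) *+ 2)).
  by apply: eq_bigr => i _; rewrite mapH; ring.
by rewrite sumrB big_split /= sumrMnl residual_orth mul0rn subr0 mapD_norm.
Qed.

Lemma lsq_adj_min Y H : lsq_err Y (lsq_adj Y) <= lsq_err Y H.
Proof.
by rewrite (lsq_err_pythagoras Y H) lerDl sumr_ge0 // => j _; exact: mxdotxx_ge0.
Qed.

Lemma lsq_adj_unique Y H : lsq_err Y H <= lsq_err Y (lsq_adj Y) -> H =1 lsq_adj Y.
Proof.
rewrite (lsq_err_pythagoras Y H) gerDl => sum_le0 j.
have dist_ge0 j' (_ : true) := mxdotxx_ge0 (H j' - lsq_adj Y j').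
have sum_eq0 : \sum_j' mxdot (H j' - lsq_adj Y j') (H j' - lsq_adj Y j') = 0.
  by apply/eqP; rewrite eq_le sum_le0 sumr_ge0.
have /eqP := psumr_eq0P dist_ge0 sum_eq0 (i := j) isT.
by rewrite mxdotxx_eq0 subr_eq0 => /eqP.
Qed.
End LeastSquares.

Section CoreAtPosition.
Variables (R : rcfType) (d : nat) (n r : nat -> nat).
Variables (r0 : r 0%N = 1%N) (rd : r d = 1%N) (s : 'I_d).
Implicit Types (G : tt_rep R n r) (i : midx d n) (H : 'I_(n s) -> 'M[R]_(r s, r s.+1)).

(* The value [0] for [m >= d] is junk, never used. *)
Definition cores_at G i m : 'M[R]_(r m, r m.+1) :=
  match sumbool_of_bool (m < d)%N with
  | left h => G m (i (Ordinal h))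
  | right _ => 0
  end.

Lemma cores_atE G i m (h : (m < d)%N) : cores_at G i m = G m (i (Ordinal h)).
Proof.
rewrite /cores_at; case: sumbool_of_bool => [h'|h']; last by rewrite h in h'.
by rewrite (bool_irrelevance h' h).
Qed.

Lemma ttval_mxchain G i :
  ttval r0 rd G i = castmx (r0, rd) (mxchain (cores_at G i) 0 d) ord0 ord0.
Proof.
rewrite /ttval (cprod_mxchain (X := cores_at G i)) => [|j].
  by rewrite (castmx_mxchain _ (addn0 d) _ _ rd).
have jd : (j + 0 < d)%N by rewrite addn0.
rewrite (cores_atE _ _ jd); congr (G _ _); apply: val_inj => /=.
by apply: (dffun_val_congr i); apply: val_inj; rewrite /= addn0.
Qed.

Lemma lrow_mxchain G i :
  lrow r0 G s (pre_of s i) = castmx (r0, erefl) (mxchain (cores_at G i) 0 s).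
Proof.
rewrite /lrow (cprod_mxchain (X := cores_at G i)) => [|j].
  by rewrite (castmx_mxchain _ (addn0 s) _ _ (erefl (r s))).
have jd : (j + 0 < d)%N by rewrite addn0 (ltn_trans (ltn_ord j)).
rewrite (cores_atE _ _ jd) ffunE; congr (G _ _); apply: val_inj => /=.
by apply: (dffun_val_congr i); apply: val_inj; rewrite /= addn0.
Qed.

Lemma rcol_mxchain G i :
  rcol rd G s (suf_of s i) = castmx (erefl, rd) (mxchain (cores_at G i) s.+1 d).
Proof.
rewrite /rcol (cprod_mxchain (X := cores_at G i)) => [|j].
  by rewrite (castmx_mxchain _ (subnK' s) _ _ rd).
by rewrite (cores_atE _ _ (suff_lt j)) ffunE.
Qed.

Lemma ttval_factor G i :
  ttval r0 rd G i = (lrow r0 G s (pre_of s i) *m G s (i s) *m rcol rd G s (suf_of s i)) 0 0.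
Proof.
rewrite ttval_mxchain lrow_mxchain rcol_mxchain.
rewrite (@mxchain_split _ _ _ 0 s d); last by rewrite leq0n (ltnW (ltn_ord s)).
rewrite (@mxchain_split _ _ _ s s.+1 d) ?leqnSn ?ltn_ord //.
rewrite mxchainS mulmxA !castmx_mul castmx_id (cores_atE _ _ (ltn_ord s)).
by congr ((_ *m G s _ *m _) _ _); apply: val_inj; apply: (dffun_val_congr i); apply: val_inj.
Qed.

Lemma upd_at G H x : upd G H (mu := s) x = H x.
Proof. by rewrite /upd; case: eqP => // e; rewrite (eq_irrelevance e erefl). Qed.

Lemma upd_other G H (m : nat) x : m <> s -> upd G H (mu := m) x = G m x.
Proof. by move=> ms; rewrite /upd; case: eqP => // e; case: ms. Qed.

Lemma lrow_upd G H p : lrow r0 (upd G H) s p = lrow r0 G s p.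
Proof.
rewrite /lrow; congr castmx; apply: eq_cprod => j; rewrite upd_other // addn0.
by move=> js; move: (ltn_ord j); rewrite js ltnn.
Qed.

Lemma rcol_upd G H q : rcol rd (upd G H) s q = rcol rd G s q.
Proof.
rewrite /rcol; congr castmx; apply: eq_cprod => j; rewrite upd_other //.
by move=> js; move: (leq_addl j s.+1); rewrite js ltnn.
Qed.

Lemma sum_lrow_left_orth G : (forall mu, (mu < s)%N -> left_orth G mu) ->
  \sum_(p : pidx n s) (lrow r0 G s p)^T *m lrow r0 G s p = 1%:M.
Proof.
move=> orthG; rewrite /lrow sum_trmx_castmx.
pose C (f : {dffun forall j : 'I_s, 'I_(n (j + 0)%N)}) := cprod G f.
have castC p : cprod G (fun j => cast_ord (n_addn0 n j) (p j))
               = C [ffun j : 'I_s => cast_ord (n_addn0 n j) (p j)].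
  by apply: eq_cprod => j; rewrite ffunE.
under eq_bigr do rewrite castC.
rewrite (big_dffun_cast _ (fun f => (C f)^T *m C f)) sum_cprod_left_orth => [|m].
  by case: _ / (r_addn0 r s); rewrite castmx_id.
by rewrite addn0 => /andP[_]; exact: orthG.
Qed.

Lemma sum_rcol_right_orth G : (forall mu, (s < mu < d)%N -> right_orth G mu) ->
  \sum_(q : sidx d n s) rcol rd G s q *m (rcol rd G s q)^T = 1%:M.
Proof.
move=> orthG; rewrite /rcol sum_mul_trmx_castmx sum_cprod_right_orth // subnK'.
by move=> m /andP[sm md]; apply: orthG; rewrite sm.
Qed.

Lemma suffix_lt (mu : 'I_d) : (s < mu)%N -> (mu - s.+1 < d - s.+1)%N.
Proof. by move=> smu; rewrite ltn_sub2r // (leq_ltn_trans smu). Qed.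

Lemma n_subnK (mu : 'I_d) : (s < mu)%N -> n (mu - s.+1 + s.+1)%N = n mu.
Proof. by move=> smu; rewrite subnK. Qed.

Lemma s_eq_of_nlt (mu : 'I_d) : (mu < s)%N = false -> (s < mu)%N = false -> s = mu :> nat.
Proof.
move=> /negbT; rewrite -leqNgt => smu /negbT; rewrite -leqNgt => mus.
by apply/eqP; rewrite eqn_leq smu.
Qed.

Definition join_idx (p : pidx n s) (x : 'I_(n s)) (q : sidx d n s) : midx d n :=
  [ffun mu : 'I_d => match sumbool_of_bool (mu < s)%N with
   | left h => p (Ordinal h)
   | right h => match sumbool_of_bool (s < mu)%N with
     | left h' => cast_ord (n_subnK h') (q (Ordinal (suffix_lt h')))
     | right h' => cast_ord (congr1 n (s_eq_of_nlt h h')) x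
     end
   end].

Lemma pre_of_join p x q : pre_of s (join_idx p x q) = p.
Proof.
apply/ffunP => j; rewrite !ffunE; case: sumbool_of_bool => h.
  by apply: val_inj; apply: (dffun_val_congr p); apply: val_inj.
by exfalso; move: h; rewrite /= ltn_ord.
Qed.

Lemma suf_of_join p x q : suf_of s (join_idx p x q) = q.
Proof.
apply/ffunP => j; rewrite !ffunE; case: sumbool_of_bool => h.
  by exfalso; move: h; rewrite /= ltnNge (leq_trans (leqnSn s) (leq_addl j s.+1)).
case: sumbool_of_bool => h'; last by exfalso; move: h'; rewrite /= addnS ltnS leq_addl.
by apply: val_inj; apply: (dffun_val_congr q); apply: val_inj; rewrite /= addnK.
Qed.

Lemma join_idx_at p x q : join_idx p x q s = x.
Proof.
rewrite ffunE; case: sumbool_of_bool => h; first by exfalso; move: h; rewrite ltnn.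
destruct (sumbool_of_bool (s < s)%N) as [h'|h']; last exact: val_inj.
by exfalso; move: h'; rewrite ltnn.
Qed.

Lemma join_idxK i : join_idx (pre_of s i) (i s) (suf_of s i) = i.
Proof.
apply/ffunP => mu; rewrite ffunE; case: sumbool_of_bool => h.
  by rewrite ffunE; apply: val_inj; apply: (dffun_val_congr i); apply: val_inj.
case: sumbool_of_bool => h'; apply: val_inj => /=.
  by rewrite ffunE; apply: (dffun_val_congr i); apply: val_inj; rewrite /= subnK.
by apply: (dffun_val_congr i); apply: val_inj; exact: s_eq_of_nlt.
Qed.

Lemma big_join_idx (V : nmodType) (x : 'I_(n s)) (Phi : pidx n s -> sidx d n s -> V) :
  \sum_(i : midx d n | i s == x) Phi (pre_of s i) (suf_of s i) = \sum_p \sum_q Phi p q.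
Proof.
rewrite pair_big (reindex_onto (fun u => join_idx u.1 x u.2)
  (fun i => (pre_of s i, suf_of s i))) /= => [|i /eqP <-]; last exact: join_idxK.
apply: eq_big => [[p q]|[p q] _] /=; last by rewrite pre_of_join suf_of_join.
by rewrite pre_of_join suf_of_join join_idx_at !eqxx.
Qed.
End CoreAtPosition.

Section CoreLeastSquares.
Variables (R : rcfType) (d : nat) (n r : nat -> nat).
Variables (r0 : r 0%N = 1%N) (rd : r d = 1%N) (s : 'I_d).
Implicit Types (G : tt_rep R n r) (i : midx d n) (H : 'I_(n s) -> 'M[R]_(r s, r s.+1)).

Definition core_weight G i : 'M[R]_(r s, r s.+1) :=
  (lrow r0 G s (pre_of s i))^T *m (rcol rd G s (suf_of s i))^T.

Local Notation core_map G := (lsq_map (fun i : midx d n => i s) (core_weight G)).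
Local Notation core_adj G := (lsq_adj (fun i : midx d n => i s) (core_weight G)).

Lemma ttval_upd G H i : ttval r0 rd (upd G H) i = core_map G H i.
Proof. by rewrite (ttval_factor _ _ s) lrow_upd rcol_upd upd_at mxdot_mul_rowcol. Qed.

Lemma core_adj_factor G G' H x :
  core_adj G
    (fun i => (lrow r0 G' s (pre_of s i) *m H (i s) *m rcol rd G' s (suf_of s i)) 0 0) x
  = (\sum_p (lrow r0 G s p)^T *m lrow r0 G' s p) *m H x
      *m (\sum_q rcol rd G' s q *m (rcol rd G s q)^T).
Proof.
pose Phi p q := (lrow r0 G s p)^T *m lrow r0 G' s p *m H x
                 *m rcol rd G' s q *m (rcol rd G s q)^T.
transitivity (\sum_(i : midx d n | i s == x) Phi (pre_of s i) (suf_of s i)).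
  by apply: eq_bigr => i /eqP ix; rewrite /Phi -ix scale_mul_rowcol.
rewrite big_join_idx exchange_big mulmx_sumr; apply: eq_bigr => q _.
by rewrite -mulmxA mulmx_suml; apply: eq_bigr => p _; rewrite !mulmxA.
Qed.

Lemma core_adjK G :
  (forall mu, (mu < s)%N -> left_orth G mu) ->
  (forall mu, (s < mu < d)%N -> right_orth G mu) ->
  forall H x, core_adj G (core_map G H) x = H x.
Proof.
move=> orthL orthR H x.
rewrite (eq_lsq_adj _ _ (fun i => esym (mxdot_mul_rowcol _ _ _))) core_adj_factor.
by rewrite sum_lrow_left_orth // sum_rcol_right_orth // mul1mx mulmx1.
Qed.
End CoreLeastSquares.

Theorem theorem3p7 (R : rcfType) (d : nat) (n r : nat -> nat)
    (r0 : r 0%N = 1%N) (rd : r d = 1%N)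
    (s : 'I_d) (M : midx d n -> R) (P : {set midx d n}) (alpha : R)
    (Gm G : tt_rep R n r)
    (Hleft : forall mu : nat, (mu < s)%N -> left_orth G mu)
    (Hright : forall mu : nat, (s < mu < d)%N -> right_orth G mu) :
  let Z : midx d n -> R := fun i => if i \in P then M i else ttval r0 rd Gm i in
  let Za : midx d n -> R := fun i => alpha * Z i + (1 - alpha) * ttval r0 rd Gm i in
  let Gnew : 'I_(n s) -> 'M[R]_(r s, r s.+1) := fun j =>
    (\sum_(p : pidx n s) (lrow r0 G s p)^T *m lrow r0 Gm s p) *m Gm s j
      *m (\sum_(q : sidx d n s) rcol rd Gm s q *m (rcol rd G s q)^T)
    + \sum_(i in P | i s == j)
        (alpha * (M i - ttval r0 rd Gm i))
          *: ((lrow r0 G s (pre_of s i))^T *m (rcol rd G s (suf_of s i))^T) in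
  let err (H : 'I_(n s) -> 'M[R]_(r s, r s.+1)) :=
    frob (fun i => Za i - ttval r0 rd (upd G H) i) in
  (forall H, err Gnew <= err H) /\
  (forall H, err H <= err Gnew -> forall j, H j = Gnew j).
Proof.
move=> Z Za Gnew err.
pose key (i : midx d n) := i s; pose W := core_weight r0 rd s G.
have errE H : err H = Num.sqrt (lsq_err key W Za H).
  by rewrite /err /frob; congr Num.sqrt; apply: eq_bigr => i _; rewrite ttval_upd.
have Gnew_adj : Gnew =1 lsq_adj key W Za.
  move=> x; have Za_split i : Za i = ttval r0 rd Gm i + alpha * (Z i - ttval r0 rd Gm i).
    by rewrite /Za; ring.
  rewrite (eq_lsq_adj _ _ Za_split) lsq_adjD /Gnew.
  rewrite (eq_lsq_adj _ _ (ttval_factor r0 rd s Gm)) core_adj_factor; congr (_ + _).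
  rewrite /lsq_adj big_mkcondl; apply: eq_bigr => i _; rewrite /Z.
  by case: (i \in P); rewrite ?subrr ?mulr0 ?scale0r.
have err_ge0 H : 0 <= lsq_err key W Za H by apply: sumr_ge0 => i _; exact: sqr_ge0.
have isoW := core_adjK r0 rd Hleft Hright.
split=> H; rewrite !errE ler_sqrt // (eq_lsq_err _ _ _ Gnew_adj).
  exact: lsq_adj_min.
by move=> /(lsq_adj_unique isoW) eqH j; rewrite eqH Gnew_adj.
Qed.
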